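(* Let $\mathcal{X}\subset\mathbb{R}^d$ be a compact metric space, $\mathcal{Y}\subset\mathbb{R}$, and let $(X,Y)$ be distributed according to a probability measure $\rho$ on $\mathcal{X}\times\mathcal{Y}$ with marginal $\rho_{\mathcal{X}}$. Let $f^\star(x)=\mathbb{E}(Y\mid X=x)$ be bounded, let $\mathcal{H}\subset C(\mathcal{X})$ be uniformly bounded, and set $M=\max\{\|f^\star\|_\infty,\sup_{f\in\mathcal{H}}\|f\|_\infty\}$. Assume there is $\epsilon>0$ with $\mathbb{E}|Y|^{1+\epsilon}<+\infty$, and let $\sigma>\max\{2M,1\}$. Then there exist positive constants $c_1,c_2$, independent of $\sigma$ and of $f$, such that for every measurable $f:\mathcal{X}\to\mathbb{R}$ with $\|f\|_\infty\le M$, the random variable $\xi(x,y)=\ell_\sigma(y-f(x))-\ell_\sigma(y-f^\star(x))$ satisfies \[ \mathbb{E}\xi^2\le c_1\|f-f^\star\|_{2,\rho}^{\frac{2(\epsilon-1)_+}{\epsilon+1}}+c_2\sigma^{1-\epsilon}. \]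
   Context: The Huber loss with scale parameter $\sigma>0$ is $\ell_\sigma(t)=t^2$ if $|t|\le\sigma$ and $\ell_\sigma(t)=2\sigma|t|-\sigma^2$ otherwise. $\|g\|_{2,\rho}$ is the $L^2(\rho_{\mathcal{X}})$ norm. For $t\in\mathbb{R}$, $t_+=\max(0,t)$. The expectation is over $(X,Y)\sim\rho$. *)

From HB Require Import structures.
From mathcomp Require Import all_boot all_order all_algebra.
From mathcomp Require Import all_classical all_reals all_analysis.
Set Implicit Arguments. Unset Strict Implicit. Unset Printing Implicit Defensive.
Import Order.TTheory GRing.Theory Num.Theory.
Import numFieldNormedType.Exports.
Local Open Scope classical_set_scope.
Local Open Scope ring_scope.

Definition Rd (R : realType) (d : nat) : measurableType _ :=
  g_sigma_algebraType (@open 'rV[R]_d).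

(* The sample space X x Y is (a subset of) R^d x R. *)
Definition RdR (R : realType) (d : nat) := (Rd R d * R)%type.

Definition marginal (R : realType) (d : nat)
  (rho : probability (RdR R d) R) : set (Rd R d) -> \bar R :=
  pushforward rho fst.

Section marginal_measure.
Context (R : realType) (d : nat) (rho : probability (RdR R d) R).
Local Open Scope ereal_scope.

Let marginal0 : marginal rho set0 = 0.
Proof. by rewrite /marginal /pushforward preimage_set0 measure0. Qed.

Let marginal_ge0 A : 0 <= marginal rho A.
Proof. exact: measure_ge0. Qed.

Let marginal_sigma_additive : semi_sigma_additive (marginal rho).
Proof.
move=> F mF tF mUF; rewrite /marginal /pushforward preimage_bigcup.
apply: measure_semi_sigma_additive.
- by move=> n; rewrite -[X in measurable X]setTI; exact: measurable_fst.
- apply/trivIsetP => /= i j _ _ ij; rewrite -preimage_setI.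
  by move/trivIsetP : tF => /(_ _ _ _ _ ij) ->//; rewrite preimage_set0.
- by rewrite -preimage_bigcup -[X in measurable X]setTI; exact: measurable_fst.
Qed.

HB.instance Definition _ := isMeasure.Build _ _ _
  (marginal rho) marginal0 marginal_ge0 marginal_sigma_additive.
End marginal_measure.

Definition huber (R : realType) (sigma t : R) : R :=
  if `|t| <= sigma then t ^+ 2 else 2 * sigma * `|t| - sigma ^+ 2.

(* fs is (a version of) the conditional expectation E(Y | X = x) on K:
   measurable on K, and E[Y 1_{X in A}] = E[fs(X) 1_{X in A}] for every
   measurable A included in K. *)
Definition is_cond_exp (R : realType) (d : nat)
  (rho : probability (RdR R d) R) (K : set 'rV[R]_d) (fs : 'rV[R]_d -> R) :=
  measurable_fun (K : set (Rd R d)) fs /\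
  (forall A : set (Rd R d), measurable A -> A `<=` K ->
    (\int[rho]_(p in A `*` [set: R]) (p.2)%:E
     = \int[rho]_(p in A `*` [set: R]) (fs p.1)%:E)%E).

Definition supnorm (R : realType) (d : nat) (K : set 'rV[R]_d)
  (g : 'rV[R]_d -> R) : R := sup [set `|g x| | x in K].

From HB Require Import structures.
From mathcomp Require Import all_boot all_order all_algebra.
From mathcomp Require Import all_classical all_reals all_analysis.
From mathcomp Require Import lra ring measurable_realfun.
Import Order.TTheory GRing.Theory Num.Theory.
Import numFieldNormedType.Exports.
Local Open Scope classical_set_scope.
Local Open Scope ring_scope.

(* The Huber loss is [h (|t|)] with [h] nondecreasing and [h'(u) = 2 min(u, sigma)],
   so [|l(a) - l(b)| <= 2 |a - b| min(max(|a|, |b|), sigma)].  For [a = y - f x] and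
   [b = y - f* x] this gives [xi^2 <= 4 (f x - f* x)^2 min(|y| + M, sigma)^2].  Any bound
   [min(a, sigma)^2 <= A + B a^(1+eps)] then yields, after integration,
   [E xi^2 <= 4 A ||f - f*||^2 + B C], where [C] only depends on [M] and [E |Y|^(1+eps)].
   For [eps <= 1] take [A = 0] and [B = sigma^(1-eps)]; for [eps > 1] take [A = T^2] and
   [B = T^(1-eps)], and balance the two terms with [T = ||f - f*||^(-2/(1+eps))]. *)

Section huber_loss.
Context {R : realType}.
Implicit Types s t u v a b : R.

Lemma huber_normr s t : huber s `|t| = huber s t.
Proof. by rewrite /huber normr_id real_normK ?num_real. Qed.

Lemma huber_increment_le s u v : 0 < s -> 0 <= u -> u <= v ->
  0 <= huber s v - huber s u <= 2 * (v - u) * Num.min v s.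
Proof.
move=> s0 u0 uv; have v0 := le_trans u0 uv.
rewrite /huber !ger0_norm //.
by case: (leP u s) => us; case: (leP v s) => vs;
  rewrite ?(min_l vs) ?(min_r (ltW vs)); apply/andP; split; nra.
Qed.

Lemma huber_lipschitz s a b : 0 < s ->
  `|huber s a - huber s b| <= 2 * `|a - b| * Num.min (Num.max `|a| `|b|) s.
Proof.
move=> s0; wlog ab : a b / `|a| <= `|b|.
  move=> W; have /orP[|ba] := le_total `|a| `|b|; first exact: W.
  by rewrite distrC [`|a - b|]distrC maxC; exact: W.
rewrite (max_r ab) -[huber s a]huber_normr -[huber s b]huber_normr.
have /andP[inc0 incle] := @huber_increment_le s _ _ s0 (normr_ge0 a) ab.
rewrite distrC (ger0_norm inc0); apply: le_trans incle _.
rewrite -!mulrA ler_pM2l // ler_wpM2r ?le_min ?normr_ge0 ?(ltW s0) //.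
by rewrite distrC (le_trans (ler_norm _)) // ler_dist_dist.
Qed.

End huber_loss.

Section interpolation.
Context {R : realType}.
Implicit Types s T eps a x y q : R.

Lemma powRD_le x y q : 0 <= x -> 0 <= y -> 0 <= q ->
  (x + y) `^ q <= 2 `^ q * (x `^ q + y `^ q).
Proof.
move=> x0 y0 q0; have m0 : 0 <= Num.max x y by rewrite le_max x0.
apply: (@le_trans _ _ ((2 * Num.max x y) `^ q)).
  by rewrite ge0_ler_powR ?nnegrE ?addr_ge0 ?mulr_ge0 // mulr2n mulrDl mul1r
    lerD // le_max lexx ?orbT.
rewrite powRM // ler_wpM2l ?powR_ge0 //.
by case: (leP x y) => _; rewrite ?lerDr ?lerDl powR_ge0.
Qed.

Lemma sqr_powR_split a eps : 0 <= a -> a ^+ 2 = a `^ (1 + eps) * a `^ (1 - eps).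
Proof.
move=> a0; rewrite -powRD; last by apply/implyP => /eqP; lra.
by rewrite -powR_mulrn //; congr (_ `^ _); lra.
Qed.

Lemma sqr_min_le_powR s a eps : 0 < s -> 0 < eps -> eps <= 1 -> 0 <= a ->
  Num.min a s ^+ 2 <= s `^ (1 - eps) * a `^ (1 + eps).
Proof.
move=> s0 e0 e1 a0; have m0 : 0 <= Num.min a s by rewrite le_min a0 ltW.
rewrite (sqr_powR_split _ eps m0) mulrC.
by rewrite ler_pM ?powR_ge0 // ge0_ler_powR ?nnegrE ?ge_min ?lexx ?orbT //; lra.
Qed.

Lemma sqr_le_powR_split T a eps : 0 < T -> 1 <= eps -> 0 <= a ->
  a ^+ 2 <= T ^+ 2 + T `^ (1 - eps) * a `^ (1 + eps).
Proof.
move=> T0 e1 a0; have [aT|Ta] := leP a T.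
  by rewrite ler_wpDr ?mulr_ge0 ?powR_ge0 // ler_sqr ?nnegrE // ltW.
rewrite ler_wpDl ?sqr_ge0 // (sqr_powR_split _ eps a0) mulrC ler_wpM2r ?powR_ge0 //.
have -> : 1 - eps = - (eps - 1) by lra.
have a0' : 0 < a := lt_trans T0 Ta.
rewrite !powRN lef_pV2 ?posrE ?powR_gt0 //.
by rewrite ge0_ler_powR ?nnegrE ?(ltW T0) ?(ltW Ta) // subr_ge0.
Qed.

End interpolation.

Section trunc_sqr_bound.
Context {R : realType}.

Definition trunc_sqr_bound (s q A B : R) :=
  forall a, 0 <= a -> Num.min a s ^+ 2 <= A + B * a `^ q.

Lemma trunc_sqr_bound_small_eps (s eps : R) : 0 < s -> 0 < eps -> eps <= 1 ->
  trunc_sqr_bound s (1 + eps) 0 (s `^ (1 - eps)).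
Proof. by move=> s0 e0 e1 a a0; rewrite add0r sqr_min_le_powR. Qed.

Lemma trunc_sqr_bound_large_eps (s eps T : R) : 0 <= s -> 0 < T -> 1 <= eps ->
  trunc_sqr_bound s (1 + eps) (T ^+ 2) (T `^ (1 - eps)).
Proof.
move=> s0 T0 e1 a a0; apply: le_trans _ (sqr_le_powR_split T a eps T0 e1 a0).
by rewrite ler_sqr ?nnegrE ?ge_min ?lexx // le_min a0.
Qed.

Lemma exists_trunc_sqr_bound (s eps L C : R) : 0 < s -> 0 < eps -> 0 <= L -> 0 <= C ->
  exists A B, [/\ 0 <= A, 0 <= B, trunc_sqr_bound s (1 + eps) A B &
    4 * A * L ^+ 2 + B * C <=
    (4 + C) * L `^ (2 * Num.max (eps - 1) 0 / (eps + 1)) + (C + 1) * s `^ (1 - eps)].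
Proof.
move=> s0 e0 L0 C0; have S0 := powR_ge0 s (1 - eps).
have [e1|e1] := leP eps 1.
  exists 0, (s `^ (1 - eps)); split; rewrite ?lexx //.
    exact: trunc_sqr_bound_small_eps.
  by rewrite max_r ?subr_le0 // !mulr0 !mul0r powRr0; nra.
have [->|Lp] := eqVneq L 0.
  exists (s ^+ 2), (s `^ (1 - eps)); split; rewrite ?sqr_ge0 //.
    exact: (trunc_sqr_bound_large_eps s eps s (ltW s0) s0 (ltW e1)).
  have := powR_ge0 0 (2 * Num.max (eps - 1) 0 / (eps + 1)).
  by rewrite expr0n /= mulr0 add0r; nra.
have {Lp} Lp : 0 < L by rewrite lt_def Lp.
(* This choice of [T] equalises [T ^+ 2 * L ^+ 2] and [T `^ (1 - eps)]. *)
pose T := L `^ (- 2 / (eps + 1)).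
have T0 : 0 < T by rewrite powR_gt0.
pose Phi := L `^ (2 * (eps - 1) / (eps + 1)).
have TL : T ^+ 2 * L ^+ 2 = Phi.
  rewrite -!powR_mulrn ?(ltW T0) ?(ltW Lp) // -powRrM -powRD; last by rewrite (gt_eqF Lp) implybT.
  by congr (_ `^ _); field; lra.
have TPhi : T `^ (1 - eps) = Phi by rewrite -powRrM; congr (_ `^ _); field; lra.
exists (T ^+ 2), (T `^ (1 - eps)); split; rewrite ?sqr_ge0 ?powR_ge0 //.
  exact: (trunc_sqr_bound_large_eps s eps T (ltW s0) T0 (ltW e1)).
by rewrite max_l ?subr_ge0 ?(ltW e1) // -/Phi -mulrA TL TPhi; nra.
Qed.

End trunc_sqr_bound.

Lemma huber_excess_sqr_le {R : realType} (s q M A B y fx fsx : R) :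
  0 < s -> 0 < q -> 0 <= B -> `|fx| <= M -> `|fsx| <= M ->
  trunc_sqr_bound s q A B ->
  (huber s (y - fx) - huber s (y - fsx)) ^+ 2 <=
  4 * A * (fx - fsx) ^+ 2 +
  B * (16 * M ^+ 2 * 2 `^ q * (`|y| `^ q + M `^ q)).
Proof.
move=> s0 q0 B0 fxM fsxM AB; have M0 := le_trans (normr_ge0 _) fxM.
have yM t : `|t| <= M -> `|y - t| <= `|y| + M.
  by move=> tM; rewrite (le_trans (ler_normB _ _)) ?lerD.
set a := `|y| + M; have a0 : 0 <= a by rewrite addr_ge0.
have D0 : 0 <= (fx - fsx) ^+ 2 := sqr_ge0 _.
have D4 : (fx - fsx) ^+ 2 <= 4 * M ^+ 2.
  by move: fxM fsxM; rewrite !ler_norml => /andP[? ?] /andP[? ?]; nra.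
have aq : a `^ q <= 2 `^ q * (`|y| `^ q + M `^ q).
  by apply: powRD_le => //; exact: ltW.
set m := Num.min (Num.max `|y - fx| `|y - fsx|) s.
have m0 : 0 <= m by rewrite /m le_min le_max normr_ge0 (ltW s0).
have ma : m <= Num.min a s by rewrite /m le_min !ge_min ge_max !yM ?lexx ?orbT.
have trunc : m ^+ 2 <= A + B * a `^ q.
  by apply: le_trans _ (AB a a0); rewrite ler_sqr ?nnegrE // (le_trans m0 ma).
have lip : (huber s (y - fx) - huber s (y - fsx)) ^+ 2 <= 4 * (fx - fsx) ^+ 2 * m ^+ 2.
  have -> : 4 * (fx - fsx) ^+ 2 * m ^+ 2 = (2 * `|fx - fsx| * m) ^+ 2.
    by rewrite !exprMn real_normK ?num_real //; ring.
  rewrite -real_normK ?num_real // ler_sqr ?nnegrE ?mulr_ge0 //.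
  have := huber_lipschitz s (y - fx) (y - fsx) s0.
  have -> : y - fx - (y - fsx) = fsx - fx by ring.
  by rewrite -/m [`|fsx - fx|]distrC.
apply: le_trans lip _.
have := ler_wpM2l (mulr_ge0 (ler0n _ 4) D0) trunc.
have := ler_wpM2l B0 (ler_pM D0 (powR_ge0 a q) D4 aq).
nra.
Qed.

(* [f] is only measurable on [K], so the integrands of the theorem need not be
   measurable. *)
Section nonmeasurable_integral.
Local Open Scope ereal_scope.
Context d (T : measurableType d) (R : realType).
Variable mu : {measure set T -> \bar R}.

Import HBNNSimple.

Lemma ge0_le_integral_nonmeasurable (F G : T -> \bar R) : (forall x, 0 <= F x) ->
  (forall x, F x <= G x) -> \int[mu]_x F x <= \int[mu]_x G x.
Proof.
move=> F0 FG; have G0 x : 0 <= G x := le_trans (F0 x) (FG x).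
rewrite !ge0_integralTE //; apply: ereal_sup_le => _ [h /= hF <-].
by exists h => //= x; exact: le_trans (FG x).
Qed.

Lemma ae_ge0_le_integral_nonmeasurable (F G : T -> \bar R) : measurable_fun [set: T] G ->
  (forall x, 0 <= F x) -> (forall x, 0 <= G x) ->
  {ae mu, forall x, F x <= G x} -> \int[mu]_x F x <= \int[mu]_x G x.
Proof.
move=> mG F0 G0 [N [mN N0 NFG]].
rewrite ge0_integralTE //; apply: ge_ereal_sup => _ [h /= hF <-].
have mh : measurable_fun [set: T] (fun x => (h x)%:E).
  by apply/measurable_EFinP; exact: measurable_funP.
rewrite -integralT_nnsfun (ge0_negligible_integral _ _ _ _ N0) //; last first.
  by move=> x _; rewrite lee_fin.
apply: (@le_trans _ _ (\int[mu]_(x in [set: T] `\` N) G x)).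
  apply: ge0_le_integral; first exact: measurableD.
  - by move=> x _; rewrite lee_fin.
  - exact: measurable_funS mh.
  - exact: measurable_funS mG.
  - by move=> x [_ Nx]; apply: le_trans (hF x) _; apply: contrapT => /NFG.
by apply: ge0_subset_integral => //; exact: measurableD.
Qed.

End nonmeasurable_integral.

Lemma ge0_integral_probability_affine d (T : measurableType d) (R : realType)
    (P : probability T R) (u v : T -> R) (a b c : R) :
  measurable_fun [set: T] u -> measurable_fun [set: T] v ->
  (forall x, 0 <= u x) -> (forall x, 0 <= v x) -> 0 <= a -> 0 <= b -> 0 <= c ->
  (\int[P]_x (a * u x + b * v x + c)%:E
   = a%:E * \int[P]_x (u x)%:E + b%:E * \int[P]_x (v x)%:E + c%:E)%E.
Proof.
move=> mu mv u0 v0 a0 b0 c0.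
have mau : measurable_fun [set: T] (fun x => (a%:E * (u x)%:E)%E).
  by apply: measurable_funeM; exact/measurable_EFinP.
have mbv : measurable_fun [set: T] (fun x => (b%:E * (v x)%:E)%E).
  by apply: measurable_funeM; exact/measurable_EFinP.
under eq_integral do rewrite !EFinD !EFinM.
rewrite ge0_integralD //; last 2 first.
- by move=> x _; rewrite adde_ge0 // -EFinM lee_fin mulr_ge0.
- exact: emeasurable_funD.
rewrite ge0_integralD //; last 2 first.
- by move=> x _; rewrite -EFinM lee_fin mulr_ge0.
- by move=> x _; rewrite -EFinM lee_fin mulr_ge0.
rewrite !ge0_integralZl_EFin //; try by [move=> x _; rewrite lee_fin | exact/measurable_EFinP].
by rewrite integral_cst // [X in (c%:E * X)%E]probability_setT mule1.
Qed.

Section marginal.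
Context {R : realType} {d : nat} {rho : probability (RdR R d) R}.

Lemma marginal_setT : marginal rho [set: Rd R d] = 1%E.
Proof. by rewrite /marginal /pushforward preimage_setT probability_setT. Qed.

Lemma ae_marginal (P : set (Rd R d)) : measurable P ->
  {ae rho, forall p : RdR R d, P p.1} -> {ae marginal rho, forall x, P x}.
Proof.
move=> mP [N [mN N0 PN]]; exists (~` P); split => //; first exact: measurableC.
apply: (subset_measure0 _ mN) => //; rewrite -[X in measurable X]setTI.
by apply: measurable_fst => //; exact: measurableC.
Qed.

End marginal.

Section huber_excess_integral.
Context {R : realType} {d : nat} {rho : probability (RdR R d) R}.
Context {K : set (Rd R d)} {f fs : Rd R d -> R} {M : R}.
Hypotheses (mK : measurable K) (rhoK : {ae rho, forall p : RdR R d, K p.1}).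
Hypotheses (mf : measurable_fun K f) (mfs : measurable_fun K fs).
Hypotheses (fM : forall x, K x -> `|f x| <= M) (fsM : forall x, K x -> `|fs x| <= M).

Let D := (fun x => (f x - fs x) ^+ 2) \_ K.
Let L := fine (Lnorm (marginal rho) 2%:E (fun x => (f x - fs x)%:E)).

Let mD : measurable_fun [set: Rd R d] D.
Proof.
apply/(measurable_restrictT _ _).1 => //.
by apply: measurable_funX; exact: measurable_funB.
Qed.

Let mDE : measurable_fun [set: Rd R d] (fun x => (D x)%:E).
Proof. exact/measurable_EFinP. Qed.

Let D0 x : 0 <= D x.
Proof. by rewrite /D patchE; case: ifP => // _; exact: sqr_ge0. Qed.

Let D_le x : D x <= 4 * M ^+ 2.
Proof.
rewrite /D patchE; case: ifPn => [/set_mem Kx|_]; last by rewrite mulr_ge0 ?sqr_ge0.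
by move: (fM x Kx) (fsM x Kx); rewrite !ler_norml => /andP[? ?] /andP[? ?]; nra.
Qed.

Let integral_sqr_dist_marginal :
  (\int[marginal rho]_x (`|(f x - fs x)%:E| `^ 2) = \int[marginal rho]_x (D x)%:E)%E.
Proof.
have sqrE x : (`|(f x - fs x)%:E| `^ 2)%E = ((f x - fs x) ^+ 2)%:E.
  by rewrite abse_EFin poweR_EFin powR_mulrn // real_normK ?num_real.
apply: le_anti; apply/andP; split.
- apply: ae_ge0_le_integral_nonmeasurable => // [x|]; first exact: poweR_ge0.
  apply: filterS (ae_marginal K mK rhoK) => x Kx.
  by rewrite sqrE /D patchE mem_set.
- apply: ge0_le_integral_nonmeasurable => x; first by rewrite lee_fin.
  rewrite sqrE /D patchE lee_fin; case: ifP => // _; exact: sqr_ge0.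
Qed.

Let integral_sqr_dist_fst : (\int[rho]_p (D p.1)%:E = (L ^+ 2)%:E)%E.
Proof.
have -> : (\int[rho]_p (D p.1)%:E = \int[marginal rho]_x (D x)%:E)%E.
  by rewrite /marginal ge0_integral_pushforward ?preimage_setT // => x _; rewrite lee_fin.
have Dfin : (\int[marginal rho]_x (D x)%:E)%E \is a fin_num.
  rewrite ge0_fin_numE ?integral_ge0 //; last by move=> x _; rewrite lee_fin.
  apply: (@le_lt_trans _ _ (\int[marginal rho]_x (cst (4 * M ^+ 2)%:E x))%E).
    by apply: ge0_le_integral => // [x _|x _]; rewrite lee_fin.
  by rewrite integral_cst // [X in (_ * X)%E]marginal_setT mule1 ltry.
have J0 : 0 <= fine (\int[marginal rho]_x (D x)%:E)%E.
  by rewrite fine_ge0 // integral_ge0 // => x _; rewrite lee_fin.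
rewrite -(fineK Dfin) /L unlock /= integral_sqr_dist_marginal -(fineK Dfin) poweR_EFin /=.
by rewrite -powR_mulrn ?powR_ge0 // -powRrM mulVf // powRr1.
Qed.

Context {q : R}.
Hypotheses (q0 : 0 < q) (momentY : (\int[rho]_p (`|p.2| `^ q)%:E < +oo)%E).

Let mY : measurable_fun [set: RdR R d] (fun p : RdR R d => `|p.2| `^ q).
Proof.
apply: (@measurableT_comp _ _ _ _ _ _ (@powR R ^~ q)); first exact: measurable_powR.
by apply: measurableT_comp => //; exact: normr_measurable.
Qed.

Lemma integral_huber_excess_le s A B :
  0 < s -> 0 <= A -> 0 <= B -> trunc_sqr_bound s q A B ->
  (\int[rho]_p ((huber s (p.2 - f p.1) - huber s (p.2 - fs p.1)) ^+ 2)%:E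
   <= (4 * A * L ^+ 2 + B * (16 * M ^+ 2 * 2 `^ q
         * (fine (\int[rho]_p (`|p.2| `^ q)%:E) + M `^ q)))%:E)%E.
Proof.
move=> s0 A0 B0 AB; pose c := 16 * M ^+ 2 * 2 `^ q.
have c0 : 0 <= c by rewrite /c mulr_ge0 ?powR_ge0 // mulr_ge0 ?sqr_ge0.
have Bc0 : 0 <= B * c := mulr_ge0 B0 c0.
have mDfst : measurable_fun [set: RdR R d] (fun p : RdR R d => D p.1).
  exact: measurableT_comp mD measurable_fst.
apply: (@le_trans _ _
  (\int[rho]_p (4 * A * D p.1 + B * c * `|p.2| `^ q + B * c * M `^ q)%:E)%E).
  apply: ae_ge0_le_integral_nonmeasurable.
  - apply/measurable_EFinP; apply: measurable_funD => //.
    by apply: measurable_funD; apply: measurable_funM.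
  - by move=> p; rewrite lee_fin sqr_ge0.
  - move=> p; rewrite lee_fin.
    have := D0 p.1; have := powR_ge0 `|p.2| q; have := powR_ge0 M q.
    nra.
  - apply: filterS rhoK => p Kp; rewrite lee_fin /D patchE mem_set //.
    have := huber_excess_sqr_le _ _ _ _ _ p.2 _ _ s0 q0 B0 (fM _ Kp) (fsM _ Kp) AB.
    by rewrite /c; lra.
rewrite ge0_integral_probability_affine ?Bc0 ?(mulr_ge0 Bc0) ?powR_ge0 ?mulr_ge0 //.
rewrite integral_sqr_dist_fst -(@fineK _ (\int[rho]_p _)%E); last first.
  by rewrite ge0_fin_numE ?momentY // integral_ge0 // => p _; rewrite lee_fin powR_ge0.
by rewrite -!EFinM -!EFinD lee_fin le_eqVlt -/c; apply/orP; left; apply/eqP; ring.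
Qed.

End huber_excess_integral.

Lemma compact_Rd_measurable {R : realType} {d : nat} (K : set 'rV[R]_d) :
  compact K -> measurable (K : set (Rd R d)).
Proof.
move=> cK; rewrite -[K]setCK; apply: measurableC; apply: sub_sigma_algebra.
by rewrite openC; apply: compact_closed => //; exact: norm_hausdorff.
Qed.

Lemma ler_supnorm {R : realType} {d : nat} (K : set 'rV[R]_d) (g : 'rV[R]_d -> R) x :
  (exists B, forall y, K y -> `|g y| <= B) -> K x -> `|g x| <= supnorm K g.
Proof.
move=> [B gB] Kx; apply: ub_le_sup; last by exists x.
by exists B => _ [y Ky <-]; exact: gB.
Qed.

Theorem theorem2 (R : realType) (d : nat)
  (K : set 'rV[R]_d) (Ys : set R)
  (rho : probability (RdR R d) R)
  (fs : 'rV[R]_d -> R) (H : set ('rV[R]_d -> R)) (M eps : R) :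
  compact K ->
  rho.-negligible (~` (K `*` Ys)) ->
  is_cond_exp rho K fs ->
  (exists B : R, forall x, K x -> `|fs x| <= B) ->
  (forall h, H h -> {within K, continuous h}) ->
  (exists B : R, forall h x, H h -> K x -> `|h x| <= B) ->
  M = Num.max (supnorm K fs) (sup [set supnorm K h | h in H]) ->
  0 < eps ->
  (\int[rho]_p ((`|p.2| `^ (1 + eps))%R)%:E < +oo)%E ->
  exists c1 c2 : R, 0 < c1 /\ 0 < c2 /\
    forall (sigma : R) (f : 'rV[R]_d -> R),
      Num.max (2 * M) 1 < sigma ->
      measurable_fun (K : set (Rd R d)) f ->
      (forall x, K x -> `|f x| <= M) ->
      (\int[rho]_p (((huber sigma (p.2 - f p.1)
                       - huber sigma (p.2 - fs p.1)) ^+ 2)%R)%:E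
       <= (c1 * (fine (Lnorm (marginal rho) 2%:E (fun x => (f x - fs x)%:E)))
               `^ (2 * Num.max (eps - 1) 0 / (eps + 1))
           + c2 * sigma `^ (1 - eps))%:E)%E.
Proof.
move=> cK negK [mfs _] fs_bdd _ _ Mdef e0 momentY.
have mK := compact_Rd_measurable K cK.
have rhoK : {ae rho, forall p : RdR R d, K p.1}.
  by apply: negligibleS negK => p /= nKp [Kp _]; exact: nKp.
have fsM x : K x -> `|fs x| <= M.
  by move=> Kx; rewrite Mdef le_max ler_supnorm.
have q0 : 0 < 1 + eps by rewrite addr_gt0.
pose C := 16 * M ^+ 2 * 2 `^ (1 + eps)
  * (fine (\int[rho]_p (`|p.2| `^ (1 + eps))%:E) + M `^ (1 + eps)).
have C0 : 0 <= C.
  have EY0 : 0 <= fine (\int[rho]_p (`|p.2| `^ (1 + eps))%:E).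
    by rewrite fine_ge0 // integral_ge0 // => p _; rewrite lee_fin powR_ge0.
  by rewrite /C mulr_ge0 ?addr_ge0 ?powR_ge0 // mulr_ge0 ?powR_ge0 // mulr_ge0 ?sqr_ge0.
exists (4 + C), (C + 1); split; first lra.
split; first lra.
move=> sigma f; rewrite gt_max => /andP[_ sigma1] mf fM.
have sigma0 : 0 < sigma := lt_trans ltr01 sigma1.
pose L := fine (Lnorm (marginal rho) 2%:E (fun x => (f x - fs x)%:E)).
have [A [B [A0 B0 AB ABle]]] :=
  exists_trunc_sqr_bound sigma eps L C sigma0 e0 (fine_ge0 (Lnorm_ge0 _ _ _)) C0.
apply: le_trans
  (integral_huber_excess_le mK rhoK mf mfs fM fsM q0 momentY sigma A B sigma0 A0 B0 AB) _.
by rewrite lee_fin.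
Qed.
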